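(* Let $A\in\mathrm{Mat}(2,\mathbb{Z})$ have eigenvalues $a,b\in\mathbb{Z}$. Then $\mathrm{Per}(f_A)\supseteq\{1\}\cup P_a\cup P_b$.
   Context: $\mathbb{T}^2=\mathbb{R}^2/\mathbb{Z}^2$; for $A\in\mathrm{Mat}(2,\mathbb{Z})$, $f_A:\mathbb{T}^2\to\mathbb{T}^2$ is $x+\mathbb{Z}^2\mapsto Ax+\mathbb{Z}^2$. $\mathrm{Per}(f)$ is the set of $n\in\mathbb{N}=\{1,2,\dots\}$ such that $f$ has a periodic orbit of least period exactly $n$. For $a\in\mathbb{Z}\setminus\{0\}$, $P_a=\{\mathrm{ord}_n(a): n\ge 2,\ \gcd(a,n)=1\}$, where $\mathrm{ord}_n(a)$ is the least $k>0$ with $a^k\equiv1\pmod n$; by convention $P_0=\emptyset$. *)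

From Stdlib Require Import Reals ZArith Arith.
Open Scope R_scope.

Record Mat2 : Type := mkMat2 { m11 : Z; m12 : Z; m21 : Z; m22 : Z }.

(* Points of T^2 are represented by points of R^2; two representatives
   denote the same point of T^2 iff they differ by an element of Z^2. *)
Definition torus_eq (x y : R * R) : Prop :=
  exists p q : Z, fst x - fst y = IZR p /\ snd x - snd y = IZR q.

(* The lift x |-> A x of f_A (well defined on T^2). *)
Definition fA (A : Mat2) (x : R * R) : R * R :=
  (IZR (m11 A) * fst x + IZR (m12 A) * snd x,
   IZR (m21 A) * fst x + IZR (m22 A) * snd x).

Definition InPer (A : Mat2) (n : nat) : Prop :=
  (1 <= n)%nat /\
  exists x : R * R,
    torus_eq (Nat.iter n (fA A) x) x /\
    forall k : nat, (0 < k < n)%nat -> ~ torus_eq (Nat.iter k (fA A) x) x.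

Definition is_ord (n a : Z) (k : nat) : Prop :=
  (0 < k)%nat /\ (n | a ^ Z.of_nat k - 1)%Z /\
  forall j : nat, (0 < j < k)%nat -> ~ (n | a ^ Z.of_nat j - 1)%Z.

(* k \in P_a  (P_0 is empty). *)
Definition InP (a : Z) (k : nat) : Prop :=
  a <> 0%Z /\ exists n : Z, (2 <= n)%Z /\ Z.gcd a n = 1%Z /\ is_ord n a k.

(* a, b are the eigenvalues of A: det(tI - A) = (t - a)(t - b). *)
Definition has_eigenvalues (A : Mat2) (a b : Z) : Prop :=
  forall t : Z,
    ((t - m11 A) * (t - m22 A) - m12 A * m21 A = (t - a) * (t - b))%Z.

(* If v is a primitive integer eigenvector of A for the eigenvalue a and n >= 2,
   then f_A maps the torus point (m/n) v to (a m / n) v, and (m/n) v, (m'/n) v are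
   the same point of T^2 exactly when m = m' mod n (primitivity gives Bezout
   coefficients, so an integral multiple of v/n forces the multiplier to be
   integral).  Hence v/n has least period ord_n(a). *)
From Stdlib Require Import Reals ZArith Lia.

Lemma eigenvector_exists (A : Mat2) (a : Z) :
  ((a - m11 A) * (a - m22 A) - m12 A * m21 A = 0)%Z ->
  exists w1 w2 : Z, (w1 <> 0 \/ w2 <> 0)%Z /\
    (m11 A * w1 + m12 A * w2 = a * w1)%Z /\ (m21 A * w1 + m22 A * w2 = a * w2)%Z.
Proof.
  destruct A as [p q r s]; simpl; intro Hchar.
  destruct (Z.eq_dec q 0) as [Hq|Hq]; [destruct (Z.eq_dec p a) as [Hp|Hp]|].
  - destruct (Z.eq_dec r 0) as [Hr|Hr]; [destruct (Z.eq_dec s a) as [Hs|Hs]|].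
    + exists 1%Z, 0%Z; subst; split; [lia | split; ring].
    + exists (s - a)%Z, (- r)%Z; subst; split; [lia | split; ring].
    + exists (s - a)%Z, (- r)%Z; subst; split; [lia | split; ring].
  - exists q, (a - p)%Z; split; [lia | split; nia].
  - exists q, (a - p)%Z; split; [lia | split; nia].
Qed.

Lemma primitive_eigenvector_exists (A : Mat2) (a : Z) :
  ((a - m11 A) * (a - m22 A) - m12 A * m21 A = 0)%Z ->
  exists v1 v2 u1 u2 : Z,
    (m11 A * v1 + m12 A * v2 = a * v1)%Z /\ (m21 A * v1 + m22 A * v2 = a * v2)%Z
    /\ (u1 * v1 + u2 * v2 = 1)%Z.
Proof.
  intro Hchar.
  destruct (eigenvector_exists A a Hchar) as (w1 & w2 & Hnz & E1 & E2).
  set (g := Z.gcd w1 w2).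
  assert (Hg : g <> 0%Z) by (intro Hg; apply Z.gcd_eq_0 in Hg; lia).
  destruct (Z.gcd_divide_l w1 w2) as [v1 Hv1].
  destruct (Z.gcd_divide_r w1 w2) as [v2 Hv2].
  destruct (Z.gcd_bezout w1 w2 g eq_refl) as (u1 & u2 & Hbez).
  fold g in Hv1, Hv2.
  exists v1, v2, u1, u2.
  rewrite Hv1, Hv2 in *.
  split; [|split]; apply (Z.mul_cancel_r _ _ g Hg); nia.
Qed.

Lemma InPer_1 (A : Mat2) : InPer A 1.
Proof.
  split; [lia|]. exists (0, 0)%R. split.
  - exists 0%Z, 0%Z. unfold fA; simpl. split; ring.
  - intros k Hk; lia.
Qed.

Section EigenLine.

Variables (A : Mat2) (a v1 v2 : Z).
Hypothesis (Hv1 : (m11 A * v1 + m12 A * v2 = a * v1)%Z)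
           (Hv2 : (m21 A * v1 + m22 A * v2 = a * v2)%Z).

Lemma fA_eigenvector (r : R) :
  fA A (r * IZR v1, r * IZR v2) = (IZR a * r * IZR v1, IZR a * r * IZR v2).
Proof.
  apply (f_equal IZR) in Hv1; apply (f_equal IZR) in Hv2.
  rewrite !plus_IZR, !mult_IZR in Hv1, Hv2.
  unfold fA; cbn [fst snd]; f_equal.
  - transitivity (r * (IZR (m11 A) * IZR v1 + IZR (m12 A) * IZR v2)); [ring|].
    rewrite Hv1; ring.
  - transitivity (r * (IZR (m21 A) * IZR v1 + IZR (m22 A) * IZR v2)); [ring|].
    rewrite Hv2; ring.
Qed.

Lemma iter_fA_eigenvector (m n : Z) (j : nat) :
  Nat.iter j (fA A) (IZR m / IZR n * IZR v1, IZR m / IZR n * IZR v2) =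
  (IZR (a ^ Z.of_nat j * m) / IZR n * IZR v1,
   IZR (a ^ Z.of_nat j * m) / IZR n * IZR v2).
Proof.
  induction j as [|j IH].
  - cbn [Nat.iter Z.of_nat]. rewrite Z.pow_0_r, Z.mul_1_l. reflexivity.
  - change (Nat.iter (S j) (fA A) ?x) with (fA A (Nat.iter j (fA A) x)).
    rewrite IH, fA_eigenvector, Nat2Z.inj_succ, Z.pow_succ_r by lia.
    rewrite !mult_IZR. f_equal; unfold Rdiv; ring.
Qed.

End EigenLine.

Lemma torus_eq_on_primitive_line (v1 v2 u1 u2 n m d : Z) :
  (u1 * v1 + u2 * v2 = 1)%Z -> n <> 0%Z ->
  torus_eq (IZR m / IZR n * IZR v1, IZR m / IZR n * IZR v2)
           (IZR d / IZR n * IZR v1, IZR d / IZR n * IZR v2) <-> (n | m - d)%Z.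
Proof.
  intros Hbez Hn.
  assert (HnR : IZR n <> 0%R) by (apply not_0_IZR; exact Hn).
  unfold torus_eq; cbn [fst snd]; split.
  - intros (p & q & Hp & Hq).
    assert (Z1 : ((m - d) * v1 = p * n)%Z).
    { apply eq_IZR. rewrite !mult_IZR, minus_IZR, <- Hp. field; exact HnR. }
    assert (Z2 : ((m - d) * v2 = q * n)%Z).
    { apply eq_IZR. rewrite !mult_IZR, minus_IZR, <- Hq. field; exact HnR. }
    exists (u1 * p + u2 * q)%Z.
    transitivity (u1 * ((m - d) * v1) + u2 * ((m - d) * v2))%Z.
    + transitivity ((m - d) * (u1 * v1 + u2 * v2))%Z; [rewrite Hbez|]; ring.
    + rewrite Z1, Z2; ring.
  - intros [c Hc]. exists (c * v1)%Z, (c * v2)%Z.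
    assert (HcR : (IZR m - IZR d = IZR c * IZR n)%R)
      by (rewrite <- minus_IZR, <- mult_IZR; f_equal; exact Hc).
    rewrite !mult_IZR.
    split; [transitivity ((IZR m - IZR d) / IZR n * IZR v1)
           | transitivity ((IZR m - IZR d) / IZR n * IZR v2)];
      try (field; exact HnR); rewrite HcR; field; exact HnR.
Qed.

Lemma InPer_of_InP_eigenvalue (A : Mat2) (a : Z) (k : nat) :
  ((a - m11 A) * (a - m22 A) - m12 A * m21 A = 0)%Z -> InP a k -> InPer A k.
Proof.
  intros Hchar (_ & n & Hn & _ & Hk & Hdiv & Hmin).
  destruct (primitive_eigenvector_exists A a Hchar)
    as (v1 & v2 & u1 & u2 & Hv1 & Hv2 & Hbez).
  assert (Hiter : forall j : nat,
    torus_eq (Nat.iter j (fA A) (IZR 1 / IZR n * IZR v1, IZR 1 / IZR n * IZR v2))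
             (IZR 1 / IZR n * IZR v1, IZR 1 / IZR n * IZR v2)
    <-> (n | a ^ Z.of_nat j - 1)%Z).
  { intro j. rewrite (iter_fA_eigenvector A a v1 v2 Hv1 Hv2), Z.mul_1_r.
    apply (torus_eq_on_primitive_line v1 v2 u1 u2); [exact Hbez | lia]. }
  split; [lia|].
  exists (IZR 1 / IZR n * IZR v1, IZR 1 / IZR n * IZR v2); split.
  - apply Hiter; exact Hdiv.
  - intros j Hj Heq. apply (Hmin j Hj), Hiter, Heq.
Qed.

Theorem proposition4 (A : Mat2) (a b : Z) (Hab : has_eigenvalues A a b) :
  InPer A 1 /\ (forall k : nat, InP a k -> InPer A k)
            /\ (forall k : nat, InP b k -> InPer A k).
Proof.
  split; [apply InPer_1 | split; intro k; apply InPer_of_InP_eigenvalue].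
  - specialize (Hab a); lia.
  - specialize (Hab b); lia.
Qed.
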